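(* Let $\Gamma_M$ be a perfect matching graph representing a planar trivalent graph $G$ with perfect matching $M$, and assume $(G,M)\notin\mathscr G$. If every arc of the resolution configuration $D_{\Gamma_M}(\overline 0)$ (all-zero state) is an $m$-arc, then $D_{\Gamma_M}(\overline 0)$ is not consistently orientable.
   Context: A perfect matching graph $\Gamma_M$ is an embedding in $S^2$ of a planar trivalent graph $G$ together with a perfect matching $M$; fix an ordering $M_1,\dots,M_n$ of $M$. Resolution configurations: $D=(Z(D),A(D))$, $Z(D)$ a finite set of circles immersed in $S^2$ (union has only transverse double points), $A(D)$ a finite totally ordered set of disjoint embedded arcs meeting the circles exactly in their endpoints. Surgery $s_A(D)$ along $A$: in a small disk around $A$ meeting the circles in segments with ends $z,w$ and $x,y$ ($z,x$ on one side of $A$, $w,y$ on the other), replace them by strands $z$–$y$ and $x$–$w$ crossing once transversally; arcs become $A(D)\setminus\{A\}$. An arc is an $\eta$-, $\Delta$-, or $m$-arc according as surgery changes the number of circles by $0,+1,-1$. Resolutions: for a matching edge $e=uv$, let $a,b$ be the other edges at $u$ and $c,d$ those at $v$, with $a,c$ on the same side of $e$. The $0$-resolution removes $u,v,e$, joins $a$–$c$ and $b$–$d$ by disjoint strands parallel to $e$, and places an arc joining them; the $1$-resolution joins $a$–$d$ and $b$–$c$ by strands crossing once, no arc. $D_{\Gamma_M}(v)$, $v\in\{0,1\}^n$, takes the $v_i$-resolution at $M_i$, with arcs $A_i$ ($v_i=0$) ordered by $i$. (The circles of $D_{\Gamma_M}(\overline 0)$ are pairwise disjoint embedded circles.) Bad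 face: states $v,u$ differing exactly in coordinates $i\neq j$, $v_i=v_j=0$, $u_i=u_j=1$, such that for some ordering of $\{i,j\}$: $A_i$ is an $\eta$-arc of $D_{\Gamma_M}(v)$, $A_j$ is an $\eta$-arc of $s_{A_i}(D_{\Gamma_M}(v))$, $A_j$ is a $\Delta$-arc of $D_{\Gamma_M}(v)$, and $A_i$ is an $m$-arc of $s_{A_j}(D_{\Gamma_M}(v))$. $\mathscr G$ is the family of pairs $(G,M)$ ($G$ planar trivalent, $M$ a perfect matching) such that for every perfect matching graph representing $(G,M)$ (every plane embedding, every ordering of $M$) the hypercube of states contains no bad face. Consistently orientable: a resolution configuration whose circles are pairwise disjoint embedded circles is consistently orientable if the circles can be oriented so that for every arc $A$, in a small disk around $A$ identified orientation-preservingly with $[0,1]^2$ so that the two circle segments become $\{1/3\}\times[0,1]$ and $\{2/3\}\times[0,1]$ and $A$ becomes $[1/3,2/3]\times\{1/2\}$, both segments are oriented in the same (upward) direction. *)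

From mathcomp Require Import all_boot.

Set Implicit Arguments.
Unset Strict Implicit.
Unset Printing Implicit Defensive.

Section PMG.
Variables (D : finType) (alpha sigma : D -> D).

(* D = darts (half-edges); alpha pairs the two darts of an edge;
   sigma = rotation at vertices (cyclic order of darts around a vertex,
   i.e. the embedding). Trivalent: every sigma-orbit has size 3. *)
Definition trivalent_map : Prop :=
  [/\ forall y, alpha (alpha y) = y, forall y, alpha y != y,
      forall y, sigma (sigma (sigma y)) = y & forall y, sigma y != y].

Definition norbits (f : D -> D) : nat :=
  #|[set [set z | fconnect f y z] | y : D]|.

Definition map_rel : rel D :=
  [rel y z | [|| z == sigma y, y == sigma z | z == alpha y]].
Definition ncomponents : nat :=
  #|[set [set z | connect map_rel y z] | y : D]|.

(* The rotation system is an embedding in S^2: Euler's formula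
   V - E + F = 2 on every component (vertices = sigma-orbits,
   edges = alpha-orbits, faces = orbits of sigma \o alpha). *)
Definition planar_map : Prop :=
  trivalent_map /\
  norbits sigma + norbits (sigma \o alpha) = norbits alpha + 2 * ncomponents.

Variable M : {set D}.
(* M = set of darts of matching edges. *)
Definition perfect_matching : Prop :=
  (forall y, (alpha y \in M) = (y \in M)) /\
  (forall y, #|[set z in M | fconnect sigma y z]| = 1).

(* A state is a set S of matching darts closed under alpha:
   the matching edge of x is 1-resolved iff x \in S. *)
Definition state (S : {set D}) : Prop :=
  S \subset M /\ forall x, (alpha x \in S) = (x \in S).

Definition flip (S : {set D}) (x : D) : {set D} := S :|: [set x; alpha x].

(* For a matching dart x at u (other end alpha x at v), the darts at u
   are x, a = sigma x, b = sigma^2 x, and at v: alpha x,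
   d = sigma (alpha x), c = sigma^2 (alpha x); a and c lie on the same
   side of the edge.  0-resolution joins a-c and b-d, 1-resolution joins
   a-d and b-c.  res S y is the dart joined to the non-matching dart y
   by the resolution strand. *)
Definition res (S : {set D}) (y : D) : D :=
  if sigma (sigma y) \in M then
    let x := sigma (sigma y) in
    (if x \in S then sigma (alpha x) else sigma (sigma (alpha x)))
  else
    let x := sigma y in
    (if x \in S then sigma (sigma (alpha x)) else sigma (alpha x)).

(* circles of D(S): components of the graph on non-matching darts whose
   edges are the non-matching edges and the resolution strands *)
Definition strand_rel (S : {set D}) : rel D :=
  [rel y z | (z == alpha y) || (z == res S y)].
Definition circles (S : {set D}) : {set {set D}} :=
  [set [set z | connect (strand_rel S) y z] | y in ~: M].
Definition ncircles (S : {set D}) : nat := #|circles S|.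

(* Type of the arc at the (0-resolved) matching edge of x in D(S);
   surgery along it yields D(flip S x). *)
Definition eta_arc (S : {set D}) (x : D) : Prop :=
  ncircles (flip S x) = ncircles S.
Definition Delta_arc (S : {set D}) (x : D) : Prop :=
  ncircles (flip S x) = (ncircles S).+1.
Definition m_arc (S : {set D}) (x : D) : Prop :=
  (ncircles (flip S x)).+1 = ncircles S.

Definition bad_face_cond (S : {set D}) (i j : D) : Prop :=
  [/\ eta_arc S i, eta_arc (flip S i) j, Delta_arc S j & m_arc (flip S j) i].

Definition has_bad_face : Prop :=
  exists S i j, [/\ state S, i \in M, j \in M, i \notin S & j \notin S] /\
    [/\ j != i, j != alpha i &
    (bad_face_cond S i j \/ bad_face_cond S j i)].

(* Consistent orientability of D(0): an orientation of the circles is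
   encoded by o y = true iff the circle leaves the vertex of y along the
   edge of y; at the arc of matching dart x the two strands a-c and b-d
   are parallel iff o a = o b. *)
Definition consistently_orientable0 : Prop :=
  exists o : D -> bool,
    (forall y, y \notin M -> o (alpha y) = ~~ o y /\ o (res set0 y) = ~~ o y) /\
    (forall x, x \in M -> o (sigma x) = o (sigma (sigma x))).

End PMG.

(* (G, M) belongs to the family script-G: for every planar embedding
   (rotation system sigma' with the same vertices as sigma) there is no
   bad face. *)
Definition in_scriptG (D : finType) (alpha sigma : D -> D) (M : {set D}) : Prop :=
  forall sigma' : D -> D,
    planar_map alpha sigma' ->
    (forall y z, fconnect sigma' y z = fconnect sigma y z) ->
    ~ has_bad_face alpha sigma' M.

From Pilot Require Import Defs.
From mathcomp Require Import all_boot fingroup perm.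

Set Implicit Arguments.
Unset Strict Implicit.
Unset Printing Implicit Defensive.

(* A consistent orientation [o] of D(0) is constant on the non-matching darts
   of a vertex, so it does not depend on the embedding, and it is compatible
   with every resolution, so it orients every D(S).  Recording at each dart
   whether the circle leaves along it, the circles of D(S) become the cycles
   of the permutation "cross the edge, then follow the strand" on the outgoing
   darts.  Surgery at an arc composes that permutation with a transposition,
   which changes the number of cycles by exactly one: no arc of any state of
   any embedding is an eta-arc, so there is no bad face and (G, M) lies in
   the family. *)

Lemma fconnect_order3 (T : finType) (f : T -> T) :
  (forall y, f (f (f y)) = y) ->
  forall y z, fconnect f y z -> [\/ z = y, z = f y | z = f (f y)].
Proof.
move=> f3 y z /connectP[p fp ->{z}]; elim: p y fp => [|w p IHp] y /=; first by constructor 1.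
move=> /andP[/eqP <- fp].
by case: (IHp _ fp) => ->; [constructor 2 | constructor 3 | constructor 1].
Qed.

Lemma card_porbits_fix (T : finType) (g : {perm T}) (A : {set T}) :
  (forall y, y \notin A -> g y = y) ->
  #|porbits g| = #|porbit g @: A| + #|~: A|.
Proof.
move=> gfix.
have porbit_fix y : y \notin A -> porbit g y = [set y].
  move=> yA; apply/setP => z; rewrite inE; apply/porbitP/eqP => [[i ->]|->].
    by elim: i => [|i IHi]; rewrite ?expg0 ?perm1 // expgSr permM IHi gfix.
  by exists 0; rewrite expg0 perm1.
have -> : porbits g = porbit g @: (A :|: ~: A).
  by rewrite setUCr; apply/setP => X; apply/imsetP/imsetP => -[y _ ->]; exists y.
rewrite imsetU cardsU.
have -> : (porbit g @: A) :&: (porbit g @: ~: A) = set0.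
  apply/setP => X; rewrite !inE; apply/negbTE/andP => -[/imsetP[y1 y1A ->] /imsetP[y2]].
  rewrite inE => y2A; rewrite (porbit_fix _ y2A) => eq_y12.
  by have := porbit_id g y1; rewrite eq_y12 => /set1P y12; rewrite -y12 y1A in y2A.
have -> : porbit g @: (~: A) = (fun y => [set y]) @: (~: A).
  by apply: eq_in_imset => y; rewrite inE; apply: porbit_fix.
by rewrite cards0 subn0 (card_imset _ (@set1_inj _)).
Qed.

Section PerfectMatching.
Variables (D : finType) (sigma : D -> D) (M : {set D}).
Hypothesis sigma3 : forall y, sigma (sigma (sigma y)) = y.
Hypothesis sigma_neq : forall y, sigma y != y.
Hypothesis matching1 : forall y, #|[set z in M | fconnect sigma y z]| = 1.

Lemma sigma2_neq x : sigma (sigma x) != x.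
Proof. by apply/eqP => ssx; have /eqP := sigma3 x; rewrite ssx (negbTE (sigma_neq x)). Qed.

Lemma matching_uniq_at_vertex x z : x \in M -> z \in M -> fconnect sigma x z -> z = x.
Proof.
move=> xM zM xz; apply/eqP; apply: contraT => zx.
have : [set x; z] \subset [set z in M | fconnect sigma x z].
  by apply/subsetP => w; rewrite !inE => /orP[]/eqP->; rewrite ?xM ?zM ?connect0.
by move/subset_leq_card; rewrite matching1 cards2 eq_sym zx.
Qed.

Lemma sigma_notin_matching x : x \in M -> sigma x \notin M.
Proof.
move=> xM; apply: contra (sigma_neq x) => sxM.
by rewrite (matching_uniq_at_vertex xM sxM (fconnect1 _ _)).
Qed.

Lemma sigma2_notin_matching x : x \in M -> sigma (sigma x) \notin M.
Proof.
move=> xM; apply: contra (sigma2_neq x) => ssxM.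
by rewrite (matching_uniq_at_vertex xM ssxM) // (connect_trans (fconnect1 _ _) (fconnect1 _ _)).
Qed.

Lemma notin_matching_cover y :
  y \notin M -> exists2 x, x \in M & y = sigma x \/ y = sigma (sigma x).
Proof.
move=> yM; have : 0 < #|[set z in M | fconnect sigma y z]| by rewrite matching1.
rewrite card_gt0 => /set0Pn[x]; rewrite inE => /andP[xM /(fconnect_order3 sigma3)].
case=> xE; subst x; first by rewrite xM in yM.
  by exists (sigma y); last by right; rewrite sigma3.
by exists (sigma (sigma y)); last by left; rewrite sigma3.
Qed.

End PerfectMatching.

(* For a perfect matching this is equivalent to [consistently_orientable0],
   but it no longer mentions the resolution. *)
Definition consistent_orientation (D : finType) (alpha sigma : D -> D) (M : {set D})
    (o : D -> bool) : Prop :=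
  [/\ forall y, y \notin M -> o (alpha y) = ~~ o y,
      forall x, x \in M -> o (sigma (sigma x)) = o (sigma x)
    & forall x, x \in M -> o (sigma (alpha x)) = ~~ o (sigma x)].

Section Circles.
Variables (D : finType) (alpha sigma : D -> D) (M : {set D}) (o : D -> bool).
Hypothesis alphaK : forall y, alpha (alpha y) = y.
Hypothesis sigma3 : forall y, sigma (sigma (sigma y)) = y.
Hypothesis sigma_neq : forall y, sigma y != y.
Hypothesis alpha_matching : forall y, (alpha y \in M) = (y \in M).
Hypothesis matching1 : forall y, #|[set z in M | fconnect sigma y z]| = 1.
Hypothesis o_alpha : forall y, y \notin M -> o (alpha y) = ~~ o y.
Hypothesis o_vertex : forall x, x \in M -> o (sigma (sigma x)) = o (sigma x).
Hypothesis o_edge : forall x, x \in M -> o (sigma (alpha x)) = ~~ o (sigma x).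

Local Open Scope group_scope.
Local Notation res := (res alpha sigma M).
Let sigmaM := sigma_notin_matching sigma_neq matching1.
Let sigma2M := sigma2_notin_matching sigma3 sigma_neq matching1.
Let cover := notin_matching_cover sigma3 matching1.

Lemma res_sigma (S : {set D}) x : x \in M ->
  res S (sigma x) = if x \in S then sigma (alpha x) else sigma (sigma (alpha x)).
Proof. by move=> xM; rewrite /Defs.res sigma3 xM. Qed.

Lemma res_sigma2 (S : {set D}) x : x \in M ->
  res S (sigma (sigma x)) = if x \in S then sigma (sigma (alpha x)) else sigma (alpha x).
Proof. by move=> xM; rewrite /Defs.res !sigma3 (negbTE (sigmaM xM)). Qed.

Lemma res_notin_matching (S : {set D}) y : y \notin M -> res S y \notin M.
Proof.
move=> /cover[x xM [->|->]]; have axM : alpha x \in M by rewrite alpha_matching.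
  by rewrite res_sigma //; case: ifP => _; [apply: sigmaM | apply: sigma2M].
by rewrite res_sigma2 //; case: ifP => _; [apply: sigma2M | apply: sigmaM].
Qed.

Lemma res_orientation (S : {set D}) y : y \notin M -> o (res S y) = ~~ o y.
Proof.
move=> /cover[x xM [->|->]]; have axM : alpha x \in M by rewrite alpha_matching.
  by rewrite res_sigma //; case: ifP => _; rewrite ?o_vertex ?o_edge.
by rewrite res_sigma2 //; case: ifP => _; rewrite ?o_vertex ?o_edge.
Qed.

Lemma resK (S : {set D}) : (forall x, (alpha x \in S) = (x \in S)) ->
  forall y, y \notin M -> res S (res S y) = y.
Proof.
move=> S_alpha y /cover[x xM yx]; have axM : alpha x \in M by rewrite alpha_matching.
case: yx => ->; [rewrite res_sigma // | rewrite res_sigma2 //]; case: ifP => xS;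
  by rewrite ?(res_sigma _ axM) ?(res_sigma2 _ axM) ?S_alpha ?xS ?alphaK.
Qed.

Definition out_darts := [set y | (y \notin M) && o y].

Section State.
Variable S : {set D}.
Hypothesis S_alpha : forall x, (alpha x \in S) = (x \in S).
Local Notation strand := (strand_rel alpha sigma M S).

Definition next_out y := if y \in out_darts then res S (alpha y) else y.

Lemma next_out_out y : y \in out_darts -> next_out y \in out_darts.
Proof.
rewrite /next_out => yout; rewrite yout; move: yout; rewrite !inE => /andP[yM oy].
have ayM : alpha y \notin M by rewrite alpha_matching.
by rewrite res_notin_matching // res_orientation // o_alpha // oy.
Qed.

Lemma next_out_fix y : y \notin out_darts -> next_out y = y.
Proof. by rewrite /next_out => /negbTE->. Qed.

Lemma next_out_inj : injective next_out.
Proof.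
move=> y z; case: (boolP (y \in out_darts)) => yout; case: (boolP (z \in out_darts)) => zout.
- rewrite /next_out yout zout => /(congr1 (res S)).
  move: yout zout; rewrite !inE => /andP[yM _] /andP[zM _].
  by rewrite !resK ?alpha_matching // => /(congr1 alpha); rewrite !alphaK.
- by move=> eq_yz; have := next_out_out yout; rewrite eq_yz next_out_fix // (negbTE zout).
- by move=> eq_yz; have := next_out_out zout; rewrite -eq_yz next_out_fix // (negbTE yout).
- by rewrite !next_out_fix.
Qed.

Definition circle_perm := perm next_out_inj.

Lemma circle_permE y : circle_perm y = next_out y.
Proof. by rewrite permE. Qed.

Lemma circle_perm_fix y : y \notin out_darts -> circle_perm y = y.
Proof. by rewrite circle_permE; apply: next_out_fix. Qed.

Lemma porbit_circle_perm_out y z :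
  y \in out_darts -> z \in porbit circle_perm y -> z \in out_darts.
Proof.
move=> yout /porbitP[i ->]; elim: i => [|i IHi]; first by rewrite expg0 perm1.
by rewrite expgSr permM circle_permE next_out_out.
Qed.

Lemma strand_alpha y : strand y (alpha y).
Proof. by rewrite /strand_rel /= eqxx. Qed.

Lemma strand_res y : strand y (res S y).
Proof. by rewrite /strand_rel /= eqxx orbT. Qed.

Lemma connect_circle_perm i y : y \in out_darts -> connect strand y ((circle_perm ^+ i) y).
Proof.
move=> yout; elim: i => [|i IHi]; first by rewrite expg0 perm1 connect0.
rewrite expgSr permM circle_permE /next_out (porbit_circle_perm_out yout) ?mem_porbit //.
apply: connect_trans IHi (connect_trans (connect1 (strand_alpha _)) (connect1 (strand_res _))).
Qed.

Definition component y := [set z | connect strand y z].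
Definition circle_of y := porbit circle_perm y :|: alpha @: porbit circle_perm y.

Lemma circle_of_closed y w w' :
  y \in out_darts -> w \in circle_of y -> strand w w' -> w' \in circle_of y.
Proof.
move=> yout; rewrite /circle_of inE => /orP[wy | /imsetP[u uy ->]] /orP[]/eqP->.
- by rewrite inE imset_f ?orbT.
- pose v := circle_perm^-1 w.
  have vy : v \in porbit circle_perm y.
    have /eqP <- : porbit circle_perm w == porbit circle_perm y by rewrite eq_porbit_mem.
    by have := mem_porbit circle_perm^-1 1 w; rewrite expg1 porbitV.
  have vout := porbit_circle_perm_out yout vy.
  have : circle_perm v = w by rewrite permKV.
  rewrite circle_permE /next_out vout => <-.
  move: vout; rewrite inE => /andP[vM _].
  by rewrite resK ?alpha_matching // inE imset_f ?orbT.
- by rewrite alphaK inE uy.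
- have uout := porbit_circle_perm_out yout uy.
  have <- : (circle_perm ^+ 1) u = res S (alpha u) by rewrite expg1 circle_permE /next_out uout.
  have /eqP <- : porbit circle_perm u == porbit circle_perm y by rewrite eq_porbit_mem.
  by rewrite inE mem_porbit.
Qed.

Lemma component_out y : y \in out_darts -> component y = circle_of y.
Proof.
move=> yout; apply/setP => z; rewrite inE; apply/idP/idP.
- case/connectP=> p; have: y \in circle_of y by rewrite inE porbit_id.
  elim: p {1 3 4}y => [|w p IHp] w0 w0y /= => [_ -> //|/andP[w0w wp] zE].
  exact: IHp (circle_of_closed yout w0y w0w) wp zE.
- rewrite /circle_of inE => /orP[/porbitP[i ->] | /imsetP[u /porbitP[i ->] ->]].
    exact: connect_circle_perm.
  exact: connect_trans (connect_circle_perm i yout) (connect1 (strand_alpha _)).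
Qed.

Lemma component_alpha y : component (alpha y) = component y.
Proof.
have yay := connect1 (strand_alpha y).
have ayy : connect strand (alpha y) y by apply: connect1; rewrite -{2}[y]alphaK strand_alpha.
by apply/setP => z; rewrite !inE; apply/idP/idP; apply: connect_trans.
Qed.

Lemma circles_out : circles alpha sigma M S = component @: out_darts.
Proof.
apply/setP => X; apply/imsetP/imsetP => -[y]; rewrite inE; last first.
  by case/andP=> yM _ ->; exists y; rewrite ?inE.
move=> yM ->; case oy: (o y); first by exists y; rewrite // inE yM oy.
by exists (alpha y); rewrite ?component_alpha // inE alpha_matching yM o_alpha // oy.
Qed.

Lemma component_outI y : y \in out_darts -> component y :&: out_darts = porbit circle_perm y.
Proof.
move=> yout; rewrite component_out //; apply/setP => z; rewrite /circle_of !inE.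
apply/idP/idP => [/andP[/orP[//|/imsetP[u uy ->]]] | zy].
  have := porbit_circle_perm_out yout uy; rewrite !inE => /andP[uM ou].
  by rewrite alpha_matching uM o_alpha // ou.
by rewrite zy; have := porbit_circle_perm_out yout zy; rewrite inE.
Qed.

Lemma ncircles_circle_perm :
  ncircles alpha sigma M S + #|~: out_darts| = #|porbits circle_perm|.
Proof.
rewrite (card_porbits_fix circle_perm_fix) /ncircles circles_out; congr (_ + _).
have -> : porbit circle_perm @: out_darts = (fun X => X :&: out_darts) @: (component @: out_darts).
  by rewrite -imset_comp; apply: eq_in_imset => y yout /=; rewrite component_outI.
rewrite card_in_imset // => _ _ /imsetP[y yout ->] /imsetP[z zout ->].
by rewrite !component_outI // !component_out // /circle_of => ->.
Qed.

End State.

Lemma flip_alpha (S : {set D}) x :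
  (forall z, (alpha z \in S) = (z \in S)) ->
  forall z, (alpha z \in flip alpha S x) = (z \in flip alpha S x).
Proof.
move=> S_alpha z; rewrite !inE S_alpha (can_eq alphaK) -[in alpha z == x](alphaK x).
by rewrite (can_eq alphaK) [(z == x) || _]orbC.
Qed.

Lemma res_flip_other (S : {set D}) x w : x \in M -> w \notin M ->
  w \notin [:: sigma x; sigma (sigma x); sigma (alpha x); sigma (sigma (alpha x))] ->
  res (flip alpha S x) w = res S w.
Proof.
move=> xM /cover[z zM zw] w_other.
have zx : z != x.
  by apply: contraNneq w_other => zE; case: zw => ->; rewrite zE !inE eqxx ?orbT.
have zax : z != alpha x.
  by apply: contraNneq w_other => zE; case: zw => ->; rewrite zE !inE eqxx ?orbT.
have zS : (z \in flip alpha S x) = (z \in S) by rewrite !inE (negbTE zx) (negbTE zax) !orbF.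
by case: zw => ->; [rewrite !res_sigma | rewrite !res_sigma2] => //; rewrite zS.
Qed.

Section Flip.
Variables (S : {set D}) (x : D).
Hypotheses (S_alpha : forall z, (alpha z \in S) = (z \in S)) (xM : x \in M) (xS : x \notin S).
Hypothesis ox : o (sigma x).

(* The outgoing darts whose strands enter the vertex of [alpha x]; surgery
   at [x] exchanges their continuations. *)
Let p := alpha (sigma (sigma (alpha x))).
Let q := alpha (sigma (alpha x)).

Lemma circle_perm_flip :
  circle_perm (flip_alpha x S_alpha) = tperm p q * circle_perm S_alpha.
Proof.
have axM : alpha x \in M by rewrite alpha_matching.
have axS : (alpha x \in S) = false by rewrite S_alpha; apply/negbTE.
have pout : p \in out_darts.
  by rewrite inE alpha_matching sigma2M // o_alpha ?sigma2M // o_vertex // o_edge // ox.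
have qout : q \in out_darts.
  by rewrite inE alpha_matching sigmaM // o_alpha ?sigmaM // o_edge // ox.
apply/permP => y; rewrite permM !circle_permE /next_out.
have flip_ax : (alpha x \in flip alpha S x) = true by rewrite !inE eqxx !orbT.
case: (tpermP p q y) => [->|->|yp yq].
- by rewrite pout qout /p /q !alphaK res_sigma2 // res_sigma // flip_ax axS.
- by rewrite pout qout /p /q !alphaK res_sigma2 // res_sigma // flip_ax axS.
case: ifP => yout //; move: (yout); rewrite inE => /andP[yM oy].
have oay : o (alpha y) = false by rewrite o_alpha // oy.
have n1 : alpha y != sigma x by apply: contraFneq oay => ->.
have n2 : alpha y != sigma (sigma x) by apply: contraFneq oay => ->; rewrite o_vertex.
have n3 : alpha y != sigma (alpha x) by apply/eqP => ayE; apply: yq; rewrite /q -ayE alphaK.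
have n4 : alpha y != sigma (sigma (alpha x)) by apply/eqP => ayE; apply: yp; rewrite /p -ayE alphaK.
by apply: res_flip_other; rewrite ?alpha_matching // !inE (negbTE n1) (negbTE n2) (negbTE n3) n4.
Qed.

Lemma ncircles_flip_neq : ncircles alpha sigma M (flip alpha S x) != ncircles alpha sigma M S.
Proof.
have pq : p != q by rewrite (can_eq alphaK) sigma_neq.
apply/eqP => eq_n; have := porbits_mul_tperm (circle_perm S_alpha) p q.
rewrite /= -circle_perm_flip -!ncircles_circle_perm eq_n pq -!addnA => /addnI/addnI.
by case: (p \notin _).
Qed.

End Flip.

Lemma not_eta_arc (S : {set D}) x : (forall z, (alpha z \in S) = (z \in S)) ->
  x \in M -> x \notin S -> ~ eta_arc alpha sigma M S x.
Proof.
move=> S_alpha xM xS; apply/eqP.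
case ox: (o (sigma x)); first exact: ncircles_flip_neq.
(* otherwise argue with the other half [alpha x] of the matching edge *)
have -> : flip alpha S x = flip alpha S (alpha x).
  by apply/setP => z; rewrite !inE alphaK; congr (_ || _); apply: orbC.
by apply: (ncircles_flip_neq S_alpha); rewrite ?alpha_matching ?S_alpha // o_edge // ox.
Qed.

End Circles.

Lemma consistent_orientation_no_bad_face (D : finType) (alpha sigma : D -> D) (M : {set D}) o :
  trivalent_map alpha sigma -> perfect_matching alpha sigma M ->
  consistent_orientation alpha sigma M o -> ~ has_bad_face alpha sigma M.
Proof.
case=> alphaK _ sigma3 sigma_neq [alpha_matching matching1] [o_alpha o_vertex o_edge].
case=> S [i [j [[[_ S_alpha] iM jM iS jS] [_ _ bad]]]].
have no_eta := not_eta_arc alphaK sigma3 sigma_neq alpha_matching matching1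
  o_alpha o_vertex o_edge S_alpha.
by case: bad => -[eta _ _ _]; [apply: (no_eta i) | apply: (no_eta j)].
Qed.

Lemma consistently_orientable0_orientation (D : finType) (alpha sigma : D -> D) (M : {set D}) :
  trivalent_map alpha sigma -> perfect_matching alpha sigma M ->
  consistently_orientable0 alpha sigma M -> exists o, consistent_orientation alpha sigma M o.
Proof.
case=> _ _ sigma3 sigma_neq [alpha_matching matching1] [o [o_strand o_vertex]].
exists o; split=> [y /o_strand[] -> _ // | x xM | x xM]; first by rewrite (o_vertex x xM).
have sxM := sigma_notin_matching sigma_neq matching1 xM.
by rewrite (o_vertex (alpha x)) ?alpha_matching // -(o_strand _ sxM).2 res_sigma // inE.
Qed.

Lemma consistent_orientation_rotation (D : finType) (alpha sigma sigma' : D -> D) (M : {set D}) o :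
  (forall y, (alpha y \in M) = (y \in M)) ->
  (forall y, sigma (sigma (sigma y)) = y) ->
  (forall y, sigma' (sigma' (sigma' y)) = y) -> (forall y, sigma' y != y) ->
  (forall y z, fconnect sigma' y z = fconnect sigma y z) ->
  consistent_orientation alpha sigma M o -> consistent_orientation alpha sigma' M o.
Proof.
move=> alpha_matching sigma3 sigma'3 sigma'_neq same_orbits [o_alpha o_vertex o_edge].
have o_at_vertex x y : x \in M -> y != x -> fconnect sigma' x y -> o y = o (sigma x).
  move=> xM yx; rewrite same_orbits => /(fconnect_order3 sigma3)[] yE; rewrite yE ?o_vertex //.
  by rewrite yE eqxx in yx.
have o_sigma' x : x \in M -> o (sigma' x) = o (sigma x).
  by move=> xM; apply: o_at_vertex; rewrite ?sigma'_neq ?fconnect1.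
have o_sigma'2 x : x \in M -> o (sigma' (sigma' x)) = o (sigma x).
  move=> xM; apply: o_at_vertex; rewrite ?sigma2_neq //.
  exact: connect_trans (fconnect1 _ _) (fconnect1 _ _).
split=> // x xM; first by rewrite (o_sigma'2 x xM) (o_sigma' x xM).
by rewrite (o_sigma' x xM) o_sigma' ?alpha_matching // o_edge.
Qed.

Lemma consistently_orientable0_in_scriptG (D : finType) (alpha sigma : D -> D) (M : {set D}) :
  planar_map alpha sigma -> perfect_matching alpha sigma M ->
  consistently_orientable0 alpha sigma M -> in_scriptG alpha sigma M.
Proof.
move=> [sigma_map _] pm /(consistently_orientable0_orientation sigma_map pm)[o o_cons].
move=> sigma' [sigma'_map _] same_orbits.
case: (sigma_map) (sigma'_map) pm => [_ _ sigma3 _] [_ _ sigma'3 sigma'_neq] [alpha_matching matching1].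
apply: (consistent_orientation_no_bad_face (o := o)) => //.
  split=> // y; rewrite -(matching1 y); congr #|pred_of_set _|.
  by apply/setP => z; rewrite !inE same_orbits.
exact: consistent_orientation_rotation o_cons.
Qed.

Theorem mainTheorem10 (D : finType) (alpha sigma : D -> D) (M : {set D}) :
  planar_map alpha sigma ->
  perfect_matching alpha sigma M ->
  ~ in_scriptG alpha sigma M ->
  (forall x, x \in M -> m_arc alpha sigma M set0 x) ->
  ~ consistently_orientable0 alpha sigma M.
Proof.
move=> planar pm not_scriptG _ /(consistently_orientable0_in_scriptG planar pm).
exact: not_scriptG.
Qed.
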